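(* Suppose the e-values are valid, i.e. $\mathbb{E}[e_t\mid\mathcal{F}_{t-1}]\le1$ a.s. whenever $\theta_t=0$, and fix $d\in(0,1]$. (a) If the $\mathcal{F}_{t-1}$-measurable testing levels satisfy, a.s. for every $t\ge1$, $$\mathrm{mem\text{-}}\widehat{\mathrm{FDP}}^{\mathrm{LORD}}(t):=\sum_{j=1}^t\frac{\alpha_j}{dR^{\mathrm d}_{j-1}+1}\le\alpha,$$ then $\mathrm{mem\text{-}FDR}(t)\le\alpha$ for all $t$. (b) Let $(\lambda_t)_{t\ge1}$ be $(0,1)$-valued with each $\lambda_t$ $\mathcal{F}_{t-1}$-measurable, and define $$\mathrm{mem\text{-}}\widehat{\mathrm{FDP}}^{\mathrm{SAFFRON}}(t):=\sum_{j=1}^t\frac{\alpha_j}{dR^{\mathrm d}_{j-1}+1}\cdot\frac{\mathbb{1}\{e_j<1/\lambda_j\}}{1-\lambda_j}.$$ Then $\mathbb{E}[\mathrm{mem\text{-}}\widehat{\mathrm{FDP}}^{\mathrm{SAFFRON}}(t)]\ge\mathbb{E}[\mathrm{mem\text{-}FDP}^*(t)]$ for all $t$, where $\mathrm{mem\text{-}FDP}^*(t)=\sum_{j\in\mathcal{H}_0(t)}\alpha_j/(dR^{\mathrm d}_{j-1}+1)$; and if the testing levels satisfy $\mathrm{mem\text{-}}\widehat{\mathrm{FDP}}^{\mathrm{SAFFRON}}(t)\le\alpha$ a.s. for every $t$, then $\mathrm{mem\text{-}FDR}(t)\le\alpha$ for all $t$.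
   Context: Let $\alpha\in(0,1)$ be a target level. Hypotheses are indexed by $t=1,2,\dots$; $\theta_t\in\{0,1\}$ is a fixed (non-random) indicator with $\theta_t=0$ iff the $t$-th null hypothesis is true. $e_1,e_2,\dots$ are nonnegative random variables (e-values). Testing levels $\alpha_1,\alpha_2,\dots$ are nonnegative random variables and the decisions are $\delta_t=\mathbb{1}\{e_t\ge 1/\alpha_t\}$ (with $\delta_t=0$ when $\alpha_t=0$). Let $\mathcal{F}_t=\sigma(\delta_1,\dots,\delta_t)$, $\mathcal{F}_0$ trivial; each $\alpha_t$ is required to be $\mathcal{F}_{t-1}$-measurable. $\mathcal{H}_0(t)=\{j\le t:\theta_j=0\}$. For a decay parameter $d\in(0,1]$, $R^{\mathrm d}_t=\sum_{j=1}^t d^{t-j}\delta_j$ with $R^{\mathrm d}_0=0$, and the decaying-memory FDR is $\mathrm{mem\text{-}FDR}(t)=\mathbb{E}\big[\sum_{j\in\mathcal{H}_0(t)}d^{t-j}\delta_j\big/R^{\mathrm d}_t\big]$ with the convention $0/0=0$. *)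

From HB Require Import structures.
From mathcomp Require Import all_boot all_order all_algebra.
From mathcomp Require Import all_classical all_reals all_analysis.
Set Implicit Arguments. Unset Strict Implicit. Unset Printing Implicit Defensive.
Import Order.TTheory GRing.Theory Num.Theory.
Local Open Scope classical_set_scope.
Local Open Scope ring_scope.

Section OnlineEFDR.
Context {d : measure_display} {T : measurableType d} {R : realType}.

Definition deltab (e al : nat -> T -> R) (t : nat) (x : T) : bool :=
  (al t x != 0) && (1 / al t x <= e t x)%R.

Definition delta (e al : nat -> T -> R) (t : nat) (x : T) : R :=
  (deltab e al t x)%:R.

Definition Rdec (dd : R) (e al : nat -> T -> R) (t : nat) (x : T) : R :=
  \sum_(1 <= j < t.+1) dd ^+ (t - j) * delta e al j x.

(* F_t = sigma(delta_1, ..., delta_t): since the delta_j are {0,1}-valued,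
   this sigma-algebra consists exactly of the preimages of arbitrary sets
   of decision vectors; F_0 = {emptyset, T} is trivial. *)
Definition Fsig (e al : nat -> T -> R) (t : nat) : set (set T) :=
  [set A | exists B : set (nat -> bool),
     A = [set x | B (fun j => ((1 <= j <= t)%N && deltab e al j x))]].

Definition Fmeas (e al : nat -> T -> R) (t : nat) (f : T -> R) : Prop :=
  forall S : set R, measurable S -> Fsig e al t (f @^-1` S).

(* E[ f | F_t ] <= 1 a.s., for nonnegative f, via the defining property of
   (generalized) conditional expectation: E[f 1_A] <= P(A) for all A in F_t *)
Definition condexp_le1 (P : probability T R) (e al : nat -> T -> R) (t : nat)
  (f : T -> R) : Prop :=
  forall A, Fsig e al t A -> (\int[P]_(x in A) (f x)%:E <= P A)%E.

(* mem-FDR(t), theta j = false iff the j-th null is true; 0/0 = 0 *)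
Definition memFDR (P : probability T R) (dd : R) (theta : nat -> bool)
  (e al : nat -> T -> R) (t : nat) : \bar R :=
  \int[P]_x ((\sum_(1 <= j < t.+1 | ~~ theta j) dd ^+ (t - j) * delta e al j x)
              / Rdec dd e al t x)%:E.

Definition memFDP_LORD (dd : R) (e al : nat -> T -> R) (t : nat) (x : T) : R :=
  \sum_(1 <= j < t.+1) al j x / (dd * Rdec dd e al j.-1 x + 1).

Definition memFDP_SAFFRON (dd : R) (e al lam : nat -> T -> R) (t : nat) (x : T) : R :=
  \sum_(1 <= j < t.+1) al j x / (dd * Rdec dd e al j.-1 x + 1)
                       * (((e j x < 1 / lam j x)%R : bool)%:R / (1 - lam j x)).

Definition memFDP_star (dd : R) (theta : nat -> bool) (e al : nat -> T -> R)
  (t : nat) (x : T) : R :=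
  \sum_(1 <= j < t.+1 | ~~ theta j) al j x / (dd * Rdec dd e al j.-1 x + 1).

End OnlineEFDR.

From HB Require Import structures.
From mathcomp Require Import all_boot all_order all_algebra.
From mathcomp Require Import all_classical all_reals all_analysis.
From mathcomp Require Import measurable_realfun.
From mathcomp Require Import lra.
Set Implicit Arguments. Unset Strict Implicit. Unset Printing Implicit Defensive.
Import Order.TTheory GRing.Theory Num.Theory.
Local Open Scope classical_set_scope.
Local Open Scope ring_scope.

(* A rejection at time j (delta_j = 1) forces R^d_j = d R^d_(j-1) + 1, and R^d_t >= d^(t-j) R^d_j,
   so the j-th term of mem-FDP(t) is at most delta_j / (d R^d_(j-1) + 1) <= w_j e_j with the LORD
   weight w_j = alpha_j / (d R^d_(j-1) + 1).  The weight is a function of delta_1, ..., delta_(j-1),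
   hence constant on each of the finitely many atoms {(delta_1, ..., delta_(j-1)) = v} that generate
   F_(j-1); on such an atom A validity of e_j gives E[w_j e_j; A] <= E[w_j; A].  Summing over the
   nulls, mem-FDR(t) <= E[mem-FDP*(t)], which is trivially below E[LORD estimate].  For SAFFRON the
   same atomwise argument applies to the Markov-type bound
   P(A) <= (1 - lambda)^-1 E[1{e < 1/lambda}; A], which follows from 1 <= 1{e < 1/lambda} + lambda e. *)

Lemma measurable_invr (R : realType) : measurable_fun setT (fun x : R => x^-1).
Proof.
have -> : (fun x : R => x^-1) = (fun x => if x == 0 then 0 else x^-1).
  by apply/funext => x; case: eqP => // ->; rewrite invr0.
apply: measurable_fun_if => //; first exact: measurable_fun_eqr.
apply: open_continuous_measurable_fun.
  rewrite (_ : _ `&` _ = [set x | x != 0]); first exact: open_neq.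
  by apply/seteqP; split => x /=; [case=> _ ->|move/negbTE].
by move=> x; rewrite inE /= => -[_ /negbT x0]; exact: inv_continuous.
Qed.

Lemma measurable_natr_bool d (T : measurableType d) (R : realType) D (b : T -> bool) :
  measurable_fun D b -> measurable_fun D (fun x => (b x)%:R : R).
Proof. by apply: (measurableT_comp (f := fun c : bool => c%:R : R)). Qed.

Section integration.
Context d (T : measurableType d) (R : realType).

Lemma measurable_sum_cond (I : Type) (s : seq I) (Pr : pred I) (F : I -> T -> R) :
  (forall i, measurable_fun setT (F i)) ->
  measurable_fun setT (fun x => \sum_(i <- s | Pr i) F i x).
Proof.
move=> mF; under eq_fun do rewrite big_mkcond /=.
by apply: measurable_sum => i; case: (Pr i) => //; exact: measurable_cst.
Qed.

Lemma ge0_integral_sum_cond (mu : {measure set T -> \bar R}) (I : Type) (s : seq I)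
    (Pr : pred I) (F : I -> T -> R) :
  (forall i, measurable_fun setT (F i)) -> (forall i x, 0 <= F i x) ->
  (\int[mu]_x (\sum_(i <- s | Pr i) F i x)%:E =
   \sum_(i <- s | Pr i) \int[mu]_x (F i x)%:E)%E.
Proof.
move=> mF F0.
rewrite (eq_integral (fun x => \sum_(i <- [seq i <- s | Pr i]) (F i x)%:E)%E); last first.
  by move=> x _; rewrite big_filter sumEFin.
rewrite ge0_integral_sum ?big_filter // => [i|i x _].
  exact/measurable_EFinP.
by rewrite lee_fin.
Qed.

Lemma integral_le_of_ae_le (P : probability T R) (F : T -> R) (c : R) :
  0 <= c -> (forall x, 0 <= F x) -> measurable_fun setT F ->
  {ae P, forall x, F x <= c} -> (\int[P]_x (F x)%:E <= c%:E)%E.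
Proof.
move=> c0 F0 mF Fc; apply: (@le_trans _ _ (\int[P]_x (cst c%:E x))%E).
  apply: ae_ge0_le_integral => //.
  - by move=> x _; rewrite lee_fin.
  - exact/measurable_EFinP.
  by apply: filterS Fc => x Fxc _; rewrite lee_fin.
rewrite integral_cst // -[leRHS]mule1.
by apply: lee_wpmul2l; [rewrite lee_fin|exact: probability_le1].
Qed.
End integration.

Lemma indic_lt_inv_add_ge1 (R : realFieldType) (l y : R) : 0 < l -> 0 <= y ->
  1 <= ((y < 1 / l)%R : bool)%:R + l * y.
Proof.
move=> l0 y0; case: ltP => [_|]; first by rewrite lerDl mulr_ge0 // ltW.
by rewrite add0r ler_pdivrMr // mulrC.
Qed.

Section saffron_factor.
Context d (T : measurableType d) (R : realType).

Definition saffron_factor (f l : T -> R) x := ((f x < 1 / l x)%R : bool)%:R / (1 - l x).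

Lemma saffron_factor_ge0 (f l : T -> R) x : l x < 1 -> 0 <= saffron_factor f l x.
Proof. by move=> l1; rewrite divr_ge0 ?ler0n // subr_ge0 ltW. Qed.

Lemma measurable_saffron_factor (f l : T -> R) :
  measurable_fun setT f -> measurable_fun setT l -> measurable_fun setT (saffron_factor f l).
Proof.
move=> mf ml; apply: measurable_funM.
  apply/measurable_natr_bool/measurable_fun_ltr => //.
  apply: measurable_funM; first exact: measurable_cst.
  exact: measurableT_comp (@measurable_invr R) ml.
apply: measurableT_comp (@measurable_invr R) _.
by apply: measurable_funB => //; exact: measurable_cst.
Qed.

Variable mu : {finite_measure set T -> \bar R}.

Lemma measure_le_integral_lt_inv (A : set T) (f : T -> R) (l : R) :
  measurable A -> measurable_fun A f -> (forall x, 0 <= f x) -> 0 < l < 1 ->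
  (\int[mu]_(x in A) (f x)%:E <= mu A)%E ->
  (mu A <= ((1 - l)^-1)%:E * \int[mu]_(x in A) (((f x < 1 / l)%R : bool)%:R)%:E)%E.
Proof.
move=> mA mf f0 /andP[l0 l1] fA.
pose ind x : R := ((f x < 1 / l)%R : bool)%:R.
have ind0 x : 0 <= ind x by rewrite /ind; case: (_ < _).
have mind : measurable_fun A (fun x => (ind x)%:E).
  by apply/measurable_EFinP/measurable_natr_bool/measurable_fun_ltr => //; exact: measurable_cst.
have mlf : measurable_fun A (fun x => (l * f x)%:E).
  by apply/measurable_EFinP/measurable_funM => //; exact: measurable_cst.
have le_mass : (mu A <= \int[mu]_(x in A) (ind x)%:E + l%:E * mu A)%E.
  rewrite -[leLHS]mul1e -integral_cst //.
  apply: (@le_trans _ _ (\int[mu]_(x in A) ((ind x)%:E + (l * f x)%:E))%E).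
    apply: (ge0_le_integral mu mA _ (measurable_cst _) (emeasurable_funD mind mlf)).
      by move=> x _; rewrite lee_fin.
    by move=> x _; rewrite /= -EFinD lee_fin indic_lt_inv_add_ge1.
  rewrite ge0_integralD //; first last.
  - by move=> x _; rewrite lee_fin mulr_ge0 // ltW.
  - by move=> x _; rewrite lee_fin.
  apply: leeD2l; under eq_integral do rewrite EFinM.
  rewrite ge0_integralZl //; first last.
  - by rewrite lee_fin ltW.
  - by move=> x _; rewrite lee_fin.
  - exact/measurable_EFinP.
  by apply: lee_wpmul2l => //; rewrite lee_fin ltW.
have I0 : (0 <= \int[mu]_(x in A) (ind x)%:E)%E.
  by apply: integral_ge0 => x _; rewrite lee_fin.
have IA : (\int[mu]_(x in A) (ind x)%:E <= mu A)%E.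
  rewrite -[leRHS]mul1e -integral_cst //.
  apply: (ge0_le_integral mu mA _ mind (measurable_cst _)) => x _; rewrite lee_fin //.
  by rewrite /ind; case: (_ < _).
move: le_mass I0 IA; rewrite -(fineK (fin_num_measure mu A mA)).
set I := (\int[mu]_(x in A) (ind x)%:E)%E; case: I => [i| |] //=.
rewrite -EFinM -EFinD !lee_fin => hp i0 ip.
by rewrite ler_pdivlMl ?subr_gt0 //; lra.
Qed.
End saffron_factor.

Section decisions.
Context d (T : measurableType d) (R : realType) (e al : nat -> T -> R).
Hypotheses (me : forall t, measurable_fun setT (e t))
           (mal : forall t, measurable_fun setT (al t)).

Lemma measurable_deltab j : measurable_fun setT (deltab e al j).
Proof.
apply: measurable_and.
  by apply: measurable_neg; apply: measurable_fun_eqr => //; exact: measurable_cst.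
apply: measurable_fun_ler => //; apply: measurable_funM; first exact: measurable_cst.
exact: measurableT_comp (@measurable_invr R) (mal j).
Qed.

Lemma measurable_delta j : measurable_fun setT (delta e al j).
Proof. exact/measurable_natr_bool/measurable_deltab. Qed.

Definition decisions n x : {ffun 'I_n -> bool} := [ffun i : 'I_n => deltab e al i.+1 x].

Definition decision_event n (v : {ffun 'I_n -> bool}) : set T := decisions n @^-1` [set v].

Definition decision_determined {U : Type} n (f : T -> U) :=
  forall x y, decisions n x = decisions n y -> f x = f y.

Lemma deltab_decisions n x y j : decisions n x = decisions n y -> (1 <= j <= n)%N ->
  deltab e al j x = deltab e al j y.
Proof.
move=> xy /andP[j1 jn]; have jn' : (j.-1 < n)%N by rewrite prednK.
by have := congr1 (fun v : {ffun 'I_n -> bool} => v (Ordinal jn')) xy; rewrite !ffunE /= prednK.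
Qed.

Lemma measurable_decision_event n (v : {ffun 'I_n -> bool}) : measurable (decision_event v).
Proof.
have -> : decision_event v = \bigcap_(i in [set: 'I_n]) (deltab e al i.+1 @^-1` [set v i]).
  apply/seteqP; split => x /=.
    by move=> <- i _; rewrite /= ffunE.
  by move=> xv; apply/ffunP => i; rewrite ffunE; exact: xv.
apply: fin_bigcap_measurable; first exact: finite_finset.
by move=> i _; rewrite -[X in measurable X]setTI; exact: measurable_deltab.
Qed.

Lemma decision_event_Fsig n (v : {ffun 'I_n -> bool}) : Fsig e al n (decision_event v).
Proof.
exists [set b | forall i : 'I_n, b i.+1 = v i].
apply/seteqP; split => x /=.
  by move=> <- i; rewrite ffunE ltn_ord.
by move=> xv; apply/ffunP => i; rewrite ffunE -xv ltn_ord.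
Qed.

Lemma Fmeas_decision_determined n (f : T -> R) :
  Fmeas e al n f -> decision_determined n f.
Proof.
move=> mf x y xy; have [B fB] := mf [set f x] (measurable_set1 _).
have : (f @^-1` [set f x]) y; last by [].
have : (f @^-1` [set f x]) x by [].
rewrite fB /=; congr B; apply/funext => j.
by case: (boolP (1 <= j <= n)%N) => //= jn; rewrite (deltab_decisions xy jn).
Qed.

Lemma integral_decision_partition (mu : {measure set T -> \bar R}) n (f : T -> \bar R) :
  (forall x, (0 <= f x)%E) -> measurable_fun setT f ->
  (\int[mu]_x f x = \sum_(v : {ffun 'I_n -> bool}) \int[mu]_(x in decision_event v) f x)%E.
Proof.
move=> f0 mf.
have cover : [set: T] = \big[setU/set0]_(v <- index_enum {ffun 'I_n -> bool}) decision_event v.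
  rewrite -bigcup_seq; apply/seteqP; split => x // _.
  by exists (decisions n x); rewrite /= ?mem_index_enum.
rewrite {1}cover ge0_integral_bigsetU -?cover //.
- exact: measurable_decision_event.
- exact: index_enum_uniq.
- by move=> v w _ _ [x [/= <- <-]].
Qed.

Lemma le_integral_decisionwise (mu : {measure set T -> \bar R}) n (f g : T -> \bar R) :
  (forall x, (0 <= f x)%E) -> measurable_fun setT f ->
  (forall x, (0 <= g x)%E) -> measurable_fun setT g ->
  (forall x0, (\int[mu]_(x in decision_event (decisions n x0)) f x
               <= \int[mu]_(x in decision_event (decisions n x0)) g x)%E) ->
  (\int[mu]_x f x <= \int[mu]_x g x)%E.
Proof.
move=> f0 mf g0 mg fg.
rewrite (integral_decision_partition mu n f0 mf) (integral_decision_partition mu n g0 mg).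
apply: lee_sum => v _; have [[x0 <-]|empty] := pselect (exists x0, decisions n x0 = v).
  exact: fg.
rewrite (_ : decision_event v = set0) ?integral_set0 //.
by apply/seteqP; split => x // xv; apply: empty; exists x.
Qed.

Variable P : probability T R.

Lemma integral_mul_le_of_condexp_le1 n (f phi : T -> R) :
  condexp_le1 P e al n f -> (forall x, 0 <= f x) -> measurable_fun setT f ->
  decision_determined n phi -> (forall x, 0 <= phi x) -> measurable_fun setT phi ->
  (\int[P]_x (phi x * f x)%:E <= \int[P]_x (phi x)%:E)%E.
Proof.
move=> Ef f0 mf dphi phi0 mphi.
apply: (le_integral_decisionwise (n := n)).
- by move=> x; rewrite lee_fin mulr_ge0.
- by apply/measurable_EFinP; exact: measurable_funM.
- by move=> x; rewrite lee_fin.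
- exact/measurable_EFinP.
move=> x0; set E := decision_event _; have mE : measurable E by exact: measurable_decision_event.
rewrite (eq_integral (fun x => (phi x0)%:E * (f x)%:E)%E); last first.
  by move=> x; rewrite inE => /dphi ->; rewrite EFinM.
rewrite [leRHS](eq_integral (fun x => cst (phi x0)%:E x)); last first.
  by move=> x; rewrite inE => /dphi ->.
rewrite ge0_integralZl ?lee_fin //; last first.
- by move=> x _; rewrite lee_fin.
- by apply/measurable_EFinP; exact: measurable_funS mf.
rewrite integral_cst //; apply: lee_wpmul2l; first by rewrite lee_fin.
exact/Ef/decision_event_Fsig.
Qed.

Lemma integral_le_mul_saffron_factor n (f phi l : T -> R) :
  condexp_le1 P e al n f -> (forall x, 0 <= f x) -> measurable_fun setT f ->
  decision_determined n phi -> (forall x, 0 <= phi x) -> measurable_fun setT phi ->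
  decision_determined n l -> (forall x, 0 < l x < 1) -> measurable_fun setT l ->
  (\int[P]_x (phi x)%:E <= \int[P]_x (phi x * saffron_factor f l x)%:E)%E.
Proof.
move=> Ef f0 mf dphi phi0 mphi dl l01 ml.
have l1 x : l x < 1 by case/andP: (l01 x).
apply: (le_integral_decisionwise (n := n)).
- by move=> x; rewrite lee_fin.
- exact/measurable_EFinP.
- by move=> x; rewrite lee_fin mulr_ge0 ?saffron_factor_ge0.
- exact/measurable_EFinP/measurable_funM/measurable_saffron_factor.
move=> x0; set E := decision_event _; have mE : measurable E by exact: measurable_decision_event.
rewrite [leLHS](eq_integral (fun x => cst (phi x0)%:E x)); last first.
  by move=> x; rewrite inE => /dphi ->.
rewrite [leRHS](eq_integral (fun x => (phi x0 / (1 - l x0))%:E *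
                               (((f x < 1 / l x0)%R : bool)%:R)%:E)%E); last first.
  move=> x; rewrite inE => xx0; rewrite -EFinM /saffron_factor.
  by rewrite (dphi _ _ xx0) (dl _ _ xx0) mulrAC mulrA.
have mind : measurable_fun E (fun x => (((f x < 1 / l x0)%R : bool)%:R : R)%:E).
  by apply/measurable_EFinP/measurable_natr_bool/measurable_fun_ltr => //; exact: measurable_funS mf.
rewrite ge0_integralZl //; last by rewrite lee_fin divr_ge0 // subr_ge0 ltW.
rewrite integral_cst // EFinM -muleA; apply: lee_wpmul2l; first by rewrite lee_fin.
apply: measure_le_integral_lt_inv => //; first exact: measurable_funS mf.
exact/Ef/decision_event_Fsig.
Qed.
End decisions.

Section decaying_memory.
Context d (T : measurableType d) (R : realType) (e al : nat -> T -> R) (dd : R).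
Hypotheses (me : forall t, measurable_fun setT (e t))
           (mal : forall t, measurable_fun setT (al t))
           (e0 : forall t x, 0 <= e t x) (al0 : forall t x, 0 <= al t x) (dd0 : 0 < dd).

Lemma delta_ge0 j x : 0 <= delta e al j x.
Proof. exact: ler0n. Qed.

Lemma delta_le_mul_e j x : delta e al j x <= al j x * e j x.
Proof.
rewrite /delta /deltab; case: (boolP (al j x != 0)) => [alj|_] /=; last first.
  by apply: mulr_ge0.
have alj0 : 0 < al j x by rewrite lt_def alj al0.
case: (boolP (1 / al j x <= e j x)) => [|_]; last exact: mulr_ge0.
by rewrite ler_pdivrMr // mulrC.
Qed.

Lemma Rdec_ge0 t x : 0 <= Rdec dd e al t x.
Proof.
by apply: sumr_ge0 => j _; apply: mulr_ge0; [exact/exprn_ge0/ltW|exact: delta_ge0].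
Qed.

Lemma RdecS t x : Rdec dd e al t.+1 x = dd * Rdec dd e al t x + delta e al t.+1 x.
Proof.
rewrite /Rdec big_nat_recr //= subnn expr0 mul1r big_distrr /=; congr (_ + _).
by apply: eq_big_nat => i /andP[_ it]; rewrite mulrA -exprS subSn.
Qed.

Lemma Rdec_decay_le j t x : (j <= t)%N ->
  dd ^+ (t - j) * Rdec dd e al j x <= Rdec dd e al t x.
Proof.
elim: t => [|t IH]; first by rewrite leqn0 => /eqP ->; rewrite expr0 mul1r.
rewrite leq_eqVlt => /predU1P[->|]; first by rewrite subnn expr0 mul1r.
rewrite ltnS => jt; rewrite RdecS subSn // exprS -mulrA.
apply: (@le_trans _ _ (dd * Rdec dd e al t x)); first by rewrite ler_pM2l // IH.
by rewrite lerDl delta_ge0.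
Qed.

Lemma measurable_Rdec t : measurable_fun setT (Rdec dd e al t).
Proof.
apply: measurable_sum => j; apply: measurable_funM; first exact: measurable_cst.
exact: measurable_delta.
Qed.

Lemma Rdec_decision_determined t : decision_determined e al t (Rdec dd e al t).
Proof.
move=> x y xy; apply: eq_big_nat => j jt.
by rewrite /delta (deltab_decisions xy jt).
Qed.

Definition lord_weight j x := al j x / (dd * Rdec dd e al j.-1 x + 1).

Lemma lord_denom_gt0 j x : 0 < dd * Rdec dd e al j x + 1.
Proof. by rewrite ltr_wpDl // mulr_ge0 ?Rdec_ge0 // ltW. Qed.

Lemma lord_weight_ge0 j x : 0 <= lord_weight j x.
Proof. by rewrite divr_ge0 // ltW // lord_denom_gt0. Qed.

Lemma measurable_lord_weight j : measurable_fun setT (lord_weight j).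
Proof.
apply: measurable_funM => //; apply: measurableT_comp (@measurable_invr R) _.
apply: measurable_funD; last exact: measurable_cst.
by apply: measurable_funM; [exact: measurable_cst|exact: measurable_Rdec].
Qed.

Lemma lord_weight_decision_determined j :
  Fmeas e al j.-1 (al j) -> decision_determined e al j.-1 (lord_weight j).
Proof.
move=> Fal x y xy; rewrite /lord_weight (Fmeas_decision_determined Fal xy).
by rewrite (Rdec_decision_determined xy).
Qed.

Lemma decayed_delta_le j t x : (1 <= j <= t)%N ->
  dd ^+ (t - j) * delta e al j x / Rdec dd e al t x
  <= delta e al j x / (dd * Rdec dd e al j.-1 x + 1).
Proof.
case/andP=> j1 jt; rewrite /delta; case deltaj: (deltab e al j x); last by rewrite /= mulr0 !mul0r.
have Rj : Rdec dd e al j x = dd * Rdec dd e al j.-1 x + 1.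
  by rewrite -{1}(prednK j1) RdecS prednK // /delta deltaj.
have := Rdec_decay_le x jt; rewrite Rj => decay.
have Rt : 0 < Rdec dd e al t x.
  by apply: lt_le_trans decay; rewrite mulr_gt0 ?exprn_gt0 ?lord_denom_gt0.
by rewrite mulr1 mul1r ler_pdivrMr // mulrC ler_pdivlMr ?lord_denom_gt0.
Qed.
End decaying_memory.

Section memFDR_control.
Context d (T : measurableType d) (R : realType) (P : probability T R)
  (dd : R) (theta : nat -> bool) (e al : nat -> T -> R).
Hypotheses (me : forall t, measurable_fun setT (e t))
           (mal : forall t, measurable_fun setT (al t))
           (e0 : forall t x, 0 <= e t x) (al0 : forall t x, 0 <= al t x) (dd0 : 0 < dd)
           (Fal : forall t, (1 <= t)%N -> Fmeas e al t.-1 (al t))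
           (Ee : forall t, (1 <= t)%N -> ~~ theta t -> condexp_le1 P e al t.-1 (e t)).

Let w := lord_weight e al dd.
Let mw j : measurable_fun setT (w j). Proof. exact: measurable_lord_weight. Qed.
Let w0 j x : 0 <= w j x. Proof. exact: lord_weight_ge0. Qed.

Lemma memFDR_le_memFDP_star t :
  (memFDR P dd theta e al t <= \int[P]_x (memFDP_star dd theta e al t x)%:E)%E.
Proof.
have mwe j : measurable_fun setT (fun x => w j x * e j x) by exact: measurable_funM.
apply: (@le_trans _ _ (\int[P]_x (\sum_(1 <= j < t.+1 | ~~ theta j) w j x * e j x)%:E)%E).
  apply: ge0_le_integral => //.
  - move=> x _; rewrite lee_fin divr_ge0 ?Rdec_ge0 //.
    by apply: sumr_ge0 => j _; rewrite mulr_ge0 ?delta_ge0 ?exprn_ge0 ?ltW.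
  - apply/measurable_EFinP/measurable_funM.
      apply: measurable_sum_cond => j; apply: measurable_funM; first exact: measurable_cst.
      exact: measurable_delta.
    exact: measurableT_comp (@measurable_invr R) (measurable_Rdec dd me mal t).
  - exact/measurable_EFinP/measurable_sum_cond.
  move=> x _; rewrite lee_fin mulr_suml big_nat_cond [leRHS]big_nat_cond.
  apply: ler_sum => j /andP[jt _]; apply: le_trans (decayed_delta_le e al dd0 x jt) _.
  by rewrite /w /lord_weight mulrAC ler_pM2r ?invr_gt0 ?lord_denom_gt0 // delta_le_mul_e.
rewrite !ge0_integral_sum_cond // => [|j x]; last by rewrite mulr_ge0.
rewrite big_nat_cond [leRHS]big_nat_cond; apply: lee_sum => j /andP[/andP[j1 _] nullj].
apply: (integral_mul_le_of_condexp_le1 me mal (Ee j1 nullj)) => //.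
exact: lord_weight_decision_determined (Fal j1).
Qed.

Lemma memFDP_LORD_ge0 t x : 0 <= memFDP_LORD dd e al t x.
Proof. by apply: sumr_ge0 => j _; exact: w0. Qed.

Lemma measurable_memFDP_LORD t : measurable_fun setT (memFDP_LORD dd e al t).
Proof. exact: measurable_sum_cond. Qed.

Lemma memFDP_star_le_LORD t x : memFDP_star dd theta e al t x <= memFDP_LORD dd e al t x.
Proof.
rewrite /memFDP_LORD (bigID (fun j => ~~ theta j)) /= lerDl.
by apply: sumr_ge0 => j _; exact: w0.
Qed.

Lemma integral_memFDP_star_le_LORD t :
  (\int[P]_x (memFDP_star dd theta e al t x)%:E
   <= \int[P]_x (memFDP_LORD dd e al t x)%:E)%E.
Proof.
apply: ge0_le_integral => //.
- by move=> x _; rewrite lee_fin; apply: sumr_ge0 => j _; exact: w0.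
- exact/measurable_EFinP/measurable_sum_cond.
- exact/measurable_EFinP/measurable_memFDP_LORD.
by move=> x _; rewrite lee_fin memFDP_star_le_LORD.
Qed.

Section saffron.
Variable lam : nat -> T -> R.
Hypotheses (lam01 : forall t x, 0 < lam t x < 1) (mlam : forall t, measurable_fun setT (lam t)).

Let ws j x := w j x * saffron_factor (e j) (lam j) x.
Let ws0 j x : 0 <= ws j x.
Proof. by rewrite mulr_ge0 ?saffron_factor_ge0 //; case/andP: (lam01 j x). Qed.
Let mws j : measurable_fun setT (ws j).
Proof. exact/measurable_funM/measurable_saffron_factor. Qed.

Lemma memFDP_SAFFRON_ge0 t x : 0 <= memFDP_SAFFRON dd e al lam t x.
Proof. by apply: sumr_ge0 => j _; exact: ws0. Qed.

Lemma measurable_memFDP_SAFFRON t : measurable_fun setT (memFDP_SAFFRON dd e al lam t).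
Proof. exact: measurable_sum_cond. Qed.

Lemma integral_memFDP_star_le_SAFFRON t :
  (forall t, (1 <= t)%N -> Fmeas e al t.-1 (lam t)) ->
  (\int[P]_x (memFDP_star dd theta e al t x)%:E
   <= \int[P]_x (memFDP_SAFFRON dd e al lam t x)%:E)%E.
Proof.
move=> Flam; rewrite /memFDP_SAFFRON !ge0_integral_sum_cond //.
apply: (@le_trans _ _ (\sum_(1 <= j < t.+1 | ~~ theta j) \int[P]_x (ws j x)%:E)%E).
  rewrite big_nat_cond [leRHS]big_nat_cond; apply: lee_sum => j /andP[/andP[j1 _] nullj].
  apply: (integral_le_mul_saffron_factor me mal (Ee j1 nullj)) => //.
  - exact: lord_weight_decision_determined (Fal j1).
  - exact: w0.
  - exact: mw.
  - exact: Fmeas_decision_determined (Flam j j1).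
apply: lee_sum_nneg_subset => // j _.
by apply: integral_ge0 => x _; rewrite lee_fin.
Qed.
End saffron.

Lemma memFDR_le_of_estimate (F : nat -> T -> R) (alpha : R) :
  0 <= alpha -> (forall t x, 0 <= F t x) -> (forall t, measurable_fun setT (F t)) ->
  (forall t, (\int[P]_x (memFDP_star dd theta e al t x)%:E <= \int[P]_x (F t x)%:E)%E) ->
  (forall t, (1 <= t)%N -> {ae P, forall x, F t x <= alpha}) ->
  forall t, (memFDR P dd theta e al t <= alpha%:E)%E.
Proof.
move=> alpha0 F0 mF starF Falpha t; apply: le_trans (memFDR_le_memFDP_star t) _.
case: t => [|t].
  by rewrite (eq_integral (cst 0%E)) ?integral0 ?lee_fin // => x _; rewrite /memFDP_star big_geq.
exact: le_trans (starF _) (integral_le_of_ae_le alpha0 (F0 _) (mF _) (Falpha _ _)).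
Qed.
End memFDR_control.

Theorem proposition3 (d : measure_display) (T : measurableType d) (R : realType)
  (P : probability T R) (alpha dd : R) (theta : nat -> bool)
  (e al : nat -> T -> R) :
  0 < alpha < 1 ->
  0 < dd <= 1 ->
  (forall t x, 0 <= e t x) ->
  (forall t, measurable_fun setT (e t)) ->
  (forall t x, 0 <= al t x) ->
  (forall t, measurable_fun setT (al t)) ->
  (forall t, (1 <= t)%N -> Fmeas e al t.-1 (al t)) ->
  (forall t, (1 <= t)%N -> ~~ theta t -> condexp_le1 P e al t.-1 (e t)) ->
  ((forall t, (1 <= t)%N -> {ae P, forall x, memFDP_LORD dd e al t x <= alpha}) ->
     forall t, (memFDR P dd theta e al t <= alpha%:E)%E)
  /\
  (forall lam : nat -> T -> R,
     (forall t x, 0 < lam t x < 1) ->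
     (forall t, measurable_fun setT (lam t)) ->
     (forall t, (1 <= t)%N -> Fmeas e al t.-1 (lam t)) ->
     (forall t, (\int[P]_x (memFDP_star dd theta e al t x)%:E
                 <= \int[P]_x (memFDP_SAFFRON dd e al lam t x)%:E)%E)
     /\
     ((forall t, (1 <= t)%N ->
         {ae P, forall x, memFDP_SAFFRON dd e al lam t x <= alpha}) ->
      forall t, (memFDR P dd theta e al t <= alpha%:E)%E)).
Proof.
move=> /andP[alpha0 _] /andP[dd0 _] e0 me al0 mal Fal Ee.
have control := memFDR_le_of_estimate me mal e0 al0 dd0 Fal Ee (ltW alpha0).
split.
  apply: control.
  - exact: memFDP_LORD_ge0.
  - exact: measurable_memFDP_LORD.
  - exact: integral_memFDP_star_le_LORD.
move=> lam lam01 mlam Flam.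
have star_le t := integral_memFDP_star_le_SAFFRON me mal e0 al0 dd0 Fal Ee lam01 mlam t Flam.
split => //; apply: control => //.
- exact: memFDP_SAFFRON_ge0.
- exact: measurable_memFDP_SAFFRON.
Qed.
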